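(* In the model described in the context, if all high-level operations are totally ordered, then Algorithm 1 with threshold $t\ge f+1$ satisfies strong accuracy.
   Context: Model. An asynchronous system has client processes (writers, readers, auditors) and $n$ storage objects $o_1,\dots,o_n$. Each $o_k$ is a linearisable loggable read/write register with a log $L_k$ (initially empty). Its rw-write($b$) stores a block; rw-read() returns the current block and appends $\langle p_r,\mathit{label}(b)\rangle$ to $L_k$, where $p_r$ is the reader and $\mathit{label}(b)$ identifies the value from which $b$ was derived; rw-getLog() returns $L_k$. A register over values $\mathbb{V}$ is emulated by information dispersal. An a-write($v$) encodes $v$ into $b_{v_1},\dots,b_{v_n}$ with $b_{v_k}$ sent to $o_k$. Any $\tau$ distinct blocks of $v$ recover $v$, and fewer do not. Total order: all high-level operations (a-write, a-read) are serialised via total order broadcast and executed sequentially, so the storage objects hold blocks of a single value at any time. Faults. At most $f$ objects are faulty; a faulty object may crash, omit its block, omit log records from auditors, and report records of nonexistent reads. Providing set $P_{p_r,v}$: the set of objects that received a write of $b_{v_k}$ and responded $b_{v_k}$ to a read of $p_r$. The value $v$ is effectively read by $p_r$ iff $|P_{p_r,v}|\ge\tau$. Algorithm 1 (a-audit with threshold $t$): 1. Invoke rw-getLog on all $n$ objects in parallel, and wait for responses from at least $n-f$; let $L[k]$ be the log received from $o_k$. 2. For every record $\langle p_r,\mathit{label}(v)\rangle$ in some $L[k]$, let $\mathcal{E}_{p_r,v}=\{k:\langle p_r,\mathit{label}(v)\rangle\in L[k]\}$, and add it to $E_A$ iff $|\mathcal{E}_{p_r,v}|\ge t$. 3. Return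 $E_A$. Strong accuracy: for every correct reader $p_r$ and every value $v$, $|P_{p_r,v}|<\tau$ before the audit implies $\mathcal{E}_{p_r,v}\notin E_A$. *)

(* Model of an execution of the information-dispersal register
   emulation with totally ordered high-level operations, followed by an audit
   (Algorithm 1). *)
From mathcomp Require Import all_boot.
Set Implicit Arguments. Unset Strict Implicit. Unset Printing Implicit Defensive.

Section Model.
Variables (n : nat) (R V : eqType).
(* readers have type R, values type V, storage objects are 'I_n *)

(* The block b_{v_k} of value v stored at object o_k; label(b) = its value. *)
Definition block := (V * 'I_n)%type.
Definition mkblock (v : V) (k : 'I_n) : block := (v, k).
Definition label (b : block) : V := b.1.

(* A high-level operation, in the total order.
   - AWrite v : a-write(v); every object o_k receives rw-write(b_{v_k}).
   - ARead r rs : an a-read by reader r; rs lists the rw-read invocations of r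
     that were answered, as pairs (k, response of o_k); [None] = no block. *)
Inductive hop :=
| AWrite of V
| ARead of R & seq ('I_n * option block).

(* the block currently held by o_k when the last written value is cur *)
Definition cur_block (cur : option V) (k : 'I_n) : option block :=
  omap (fun v => mkblock v k) cur.

Variables (F : {set 'I_n}) (correctR : pred R) (tau : nat).

(* correct objects answer with their current block; faulty objects may
   additionally omit their block *)
Definition resp_ok (cur : option V) (k : 'I_n) (resp : option block) : bool :=
  if k \in F then (resp == None) || (resp == cur_block cur k)
  else resp == cur_block cur k.

(* a correct reader completes its a-read: it recovers some value from at least
   tau distinct blocks (unless the register was never written) *)
Definition read_ok (cur : option V) (r : R) (rs : seq ('I_n * option block)) : Prop :=
  (forall kr, kr \in rs -> resp_ok cur kr.1 kr.2) /\
  (correctR r -> cur <> None ->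
     exists w : V, tau <= #|[set k | (k, Some (mkblock w k)) \in rs]|).

Fixpoint exec_ok_from (cur : option V) (ex : seq hop) : Prop :=
  match ex with
  | [::] => True
  | AWrite v :: ex' => exec_ok_from (Some v) ex'
  | ARead r rs :: ex' => read_ok cur r rs /\ exec_ok_from cur ex'
  end.

(* executions start with empty registers *)
Definition exec_ok (ex : seq hop) : Prop := exec_ok_from None ex.

(* the log L_k of object o_k: each answered rw-read of p_r returning block b
   appends <p_r, label b> *)
Definition true_log (ex : seq hop) (k : 'I_n) : seq (R * V) :=
  flatten [seq match h with
               | AWrite _ => [::]
               | ARead r rs =>
                   [seq (r, label b) |
                     b <- pmap (fun kr : 'I_n * option block =>
                                  if kr.1 == k then kr.2 else None) rs]
               end | h <- ex].

(* providing set P_{p_r,v}: objects that received b_{v_k} (all objects do, by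
   total order) and responded b_{v_k} to a read of p_r *)
Definition providing (ex : seq hop) (r : R) (v : V) : {set 'I_n} :=
  [set k | has (fun h => match h with
                         | AWrite _ => false
                         | ARead r' rs => (r' == r) && ((k, Some (mkblock v k)) \in rs)
                         end) ex].

(* Algorithm 1 output: Resp = objects whose getLog answered, L k = log received
   from o_k. A record (p_r,v) is in E_A iff it appears in some received log and
   |E_{p_r,v}| >= t. *)
Definition audit (Resp : {set 'I_n}) (L : 'I_n -> seq (R * V)) (t : nat) : pred (R * V) :=
  fun p => has (fun k => p \in L k) (enum Resp) &&
           (t <= #|[set k in Resp | p \in L k]|).

End Model.

From mathcomp Require Import all_boot.

Set Implicit Arguments. Unset Strict Implicit.

(* A correct object o_k logs <p_r, v> only if it answered a read of p_r with
   its block of v; by total order v was then the current value, so the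
   correct reader p_r, which recovers a value from tau blocks of that read,
   can only recover v, and tau objects provide v to p_r.  Hence, when
   |P_{p_r,v}| < tau, only faulty objects can report the record, and there
   are at most f < t of them. *)

Section Accuracy.
Variables (n : nat) (R V : eqType) (F : {set 'I_n}) (correctR : pred R) (tau : nat).

Lemma resp_ok_Some cur (k : 'I_n) (b : block n V) :
  resp_ok F cur k (Some b) -> cur_block cur k = Some b.
Proof. by rewrite /resp_ok; case: (k \in F) => /= /eqP ->. Qed.

Lemma read_ok_recovers cur r (rs : seq ('I_n * option (block n V))) k b :
  read_ok F correctR tau cur r rs -> correctR r -> (k, Some b) \in rs ->
  tau <= #|[set x | (x, Some (mkblock (label b) x)) \in rs]|.
Proof.
move=> [resp_rs recover] cr kb_rs.
have cur_b := resp_ok_Some (resp_rs _ kb_rs).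
case: cur cur_b recover resp_rs => [c|] //= [<-] recover resp_rs.
case: recover => // w tau_w.
apply: leq_trans tau_w (subset_leq_card _); apply/subsetP => x.
rewrite !inE => xw_rs.
by have /= [->] := resp_ok_Some (resp_rs _ xw_rs).
Qed.

Lemma providing_cons (h : hop n R V) ex r v :
  providing ex r v \subset providing (h :: ex) r v.
Proof. by apply/subsetP => x; rewrite !inE /= => ->; rewrite orbT. Qed.

Lemma read_set_sub_providing r rs (ex : seq (hop n R V)) v :
  [set x | (x, Some (mkblock v x)) \in rs] \subset providing (ARead r rs :: ex) r v.
Proof. by apply/subsetP => x; rewrite !inE /= eqxx => ->. Qed.

Lemma mem_read_log (r r' : R) (rs : seq ('I_n * option (block n V))) k v :
  (r, v) \in [seq (r', label b) |
               b <- pmap (fun kr : 'I_n * option (block n V) =>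
                            if kr.1 == k then kr.2 else None) rs] ->
  r' = r /\ exists2 b, (k, Some b) \in rs & label b = v.
Proof.
case/mapP => b; rewrite mem_pmap => /mapP [[k' ob] + /= ob_b] [-> ->].
by case: eqP ob_b => // -> <- kb_rs; split => //; exists b.
Qed.

Lemma true_log_providing r v (ex : seq (hop n R V)) cur k :
  correctR r -> exec_ok_from F correctR tau cur ex ->
  (r, v) \in true_log ex k -> tau <= #|providing ex r v|.
Proof.
move=> cr; elim: ex cur => [|h ex IH] cur //= ok_ex.
have widen m : m <= #|providing ex r v| -> m <= #|providing (h :: ex) r v|.
  by move/leq_trans; apply; apply/subset_leq_card/providing_cons.
case: h widen ok_ex => [w|r' rs] widen /=; first by move=> ok_ex /(IH _ ok_ex) /widen.
move=> [ok_rs ok_ex]; rewrite /true_log /= mem_cat => /orP [|]; last first.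
  by move/(IH _ ok_ex)/widen.
case/mem_read_log => r'_r [b kb_rs <-]; subst r'.
apply: leq_trans (read_ok_recovers ok_rs cr kb_rs) _.
exact/subset_leq_card/read_set_sub_providing.
Qed.

End Accuracy.

Theorem lemma9 (n f tau t : nat) (R V : eqType)
  (F : {set 'I_n}) (correctR : pred R) (ex : seq (hop n R V))
  (Resp : {set 'I_n}) (L : 'I_n -> seq (R * V)) :
  #|F| <= f ->
  exec_ok F correctR tau ex ->
  n - f <= #|Resp| ->
  (forall k, k \in Resp -> k \notin F -> L k = true_log ex k) ->
  f + 1 <= t ->
  forall (r : R) (v : V), correctR r ->
    #|providing ex r v| < tau ->
    ~~ audit Resp L t (r, v).
Proof.
(* Waiting for n - f logs is needed for liveness only, not for accuracy. *)
move=> card_F ok_ex _ L_correct f_lt_t r v cr few_providers.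
rewrite /audit negb_and -ltnNge; apply/orP; right.
have reporters_faulty : [set k in Resp | (r, v) \in L k] \subset F.
  apply/subsetP => k; rewrite inE => /andP [k_Resp].
  apply: contraLR => k_correct; rewrite (L_correct _ k_Resp k_correct).
  apply/negP => /(true_log_providing cr ok_ex).
  by rewrite leqNgt few_providers.
apply: leq_ltn_trans (subset_leq_card reporters_faulty) _.
by rewrite addn1 in f_lt_t; apply: leq_ltn_trans card_F f_lt_t.
Qed.
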